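(* Let $n\ge1$, $\hat r\in\mathbb R^n$, $\delta\ge0$. For every $\pi\in\Delta_n$, $$\max_{\|\Delta\|_1\le\delta}\mathrm{Reg}(\pi,\hat r+\Delta)=\delta+\max_{1\le i\le n}(\hat r_i-\delta\pi_i)-\langle\pi,\hat r\rangle.$$ Moreover, the maximum is attained by $\Delta^\star=\delta e_k$ for any $k\in\arg\max_{1\le i\le n}\{\hat r_i-\delta\pi_i\}$.
   Context: $\Delta_n:=\{q\in\mathbb R^n_+:\sum_iq_i=1\}$. For $\pi\in\Delta_n$ and $s\in\mathbb R^n$, the regret is $\mathrm{Reg}(\pi,s):=\max_{\beta\in\Delta_n}\langle\beta-\pi,s\rangle$. $e_k$ denotes the $k$-th standard basis vector of $\mathbb R^n$. *)

From HB Require Import structures.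
From mathcomp Require Import all_boot all_order all_algebra.
From mathcomp Require Import classical_sets reals.
Set Implicit Arguments. Unset Strict Implicit. Unset Printing Implicit Defensive.
Import Order.TTheory GRing.Theory Num.Theory.
Local Open Scope ring_scope.
Local Open Scope classical_set_scope.

Section Defs.
Variables (R : realType) (n : nat).

Definition dotp (x y : 'I_n -> R) : R := \sum_(i < n) x i * y i.

Definition norm1 (x : 'I_n -> R) : R := \sum_(i < n) `|x i|.

Definition simplex : set ('I_n -> R) :=
  [set q | (forall i, 0 <= q i) /\ \sum_(i < n) q i = 1].

(* Reg(pi, s) = max_{beta in Delta_n} <beta - pi, s>  (the sup is attained:
   the simplex is compact and the map is linear) *)
Definition Reg (pi s : 'I_n -> R) : R :=
  sup [set dotp (fun i => beta i - pi i) s | beta in simplex].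

(* max_{1<=i<=n} f i, as the sup of a finite nonempty set (for n >= 1) *)
Definition maxI (f : 'I_n -> R) : R := sup (range f).

Definition basis_e (k : 'I_n) : 'I_n -> R := fun i => (i == k)%:R.

End Defs.

From HB Require Import structures.
From mathcomp Require Import all_boot all_order all_algebra.
From mathcomp Require Import classical_sets reals.
From mathcomp Require Import lra.
Import Order.TTheory GRing.Theory Num.Theory.
Local Open Scope ring_scope.

(* The regret is linear in beta, so Reg pi s = max_i s_i - <pi, s>.  For s = rhat + D
   the gain D_j - <pi, D> = <e_j - pi, D> is at most ||e_j - pi||_oo ||D||_1, and
   ||e_j - pi||_oo = 1 - pi_j on the simplex; this gives the upper bound, which the
   perturbation delta e_k, for k maximizing rhat_i - delta pi_i, attains. *)

Lemma sup_attained (R : realType) (E : set R) (x : R) :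
  E x -> ubound E x -> sup E = x.
Proof.
move=> Ex ubx; apply/le_anti/andP; split; first by apply: ge_sup => //; exists x.
by apply: ub_le_sup; [exists x | ].
Qed.

Section Simplex.
Context {R : realType} {n : nat}.
Implicit Types (f s pi D : 'I_n -> R) (i j k : 'I_n).

Lemma exists_argmax f i0 : exists j, forall i, f i <= f j.
Proof.
have [j _ fj_max] := @arg_maxP _ _ _ i0 xpredT f erefl.
by exists j => i; apply: fj_max.
Qed.

Lemma maxI_ge f i : f i <= maxI f.
Proof.
have [j fj_max] := exists_argmax f i.
apply: ub_le_sup; last by exists i.
by exists (f j) => _ [k _ <-].
Qed.

Lemma maxI_eq {f j} : (forall i, f i <= f j) -> maxI f = f j.
Proof. by move=> fj_max; apply: sup_attained; [exists j | move=> _ [k _ <-]]. Qed.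

Lemma maxI_le f c : (0 < n)%N -> (forall i, f i <= c) -> maxI f <= c.
Proof.
move=> n_gt0 f_le; have [j fj_max] := exists_argmax f (Ordinal n_gt0).
by rewrite (maxI_eq fj_max).
Qed.

Lemma dotpDr pi s D : dotp pi (fun i => s i + D i) = dotp pi s + dotp pi D.
Proof. by rewrite /dotp -big_split; apply: eq_bigr => i _; rewrite mulrDr. Qed.

Lemma dotpBl pi s D : dotp (fun i => pi i - D i) s = dotp pi s - dotp D s.
Proof. by rewrite /dotp -sumrB; apply: eq_bigr => i _; rewrite mulrBl. Qed.

Lemma sum_basis_e_mul k f : \sum_(i < n) basis_e R k i * f i = f k.
Proof.
rewrite (bigD1 k) //= big1 ?addr0 /basis_e ?eqxx ?mul1r // => i /negbTE ->.
by rewrite mul0r.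
Qed.

Lemma dotp_basis_el k s : dotp (basis_e R k) s = s k.
Proof. exact: sum_basis_e_mul. Qed.

Lemma dotp_scale_basis_er pi (c : R) k : dotp pi (fun i => c * basis_e R k i) = c * pi k.
Proof.
rewrite -(sum_basis_e_mul k (fun i => c * pi i)).
by apply: eq_bigr => i _; rewrite mulrCA [RHS]mulrCA [pi i * _]mulrC.
Qed.

Lemma norm1_scale_basis_e (c : R) k : norm1 (fun i => c * basis_e R k i) = `|c|.
Proof.
rewrite -(sum_basis_e_mul k (fun=> `|c|)); apply: eq_bigr => i _.
by rewrite normrM /basis_e; case: (i == k); rewrite ?normr1 ?normr0 ?mulr1 ?mulr0 ?mul1r ?mul0r.
Qed.

Lemma basis_e_simplex k : simplex (basis_e R k).
Proof.
split=> [i|]; first by rewrite /basis_e ler0n.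
by rewrite -(sum_basis_e_mul k (fun=> 1)); apply: eq_bigr => i _; rewrite mulr1.
Qed.

Lemma Reg_maxI pi s : (0 < n)%N -> Reg pi s = maxI s - dotp pi s.
Proof.
move=> n_gt0; have [j sj_max] := exists_argmax s (Ordinal n_gt0).
rewrite (maxI_eq sj_max); apply: sup_attained.
  by exists (basis_e R j); [apply: basis_e_simplex | rewrite dotpBl dotp_basis_el].
move=> _ [b [b_ge0 b_sum1] <-]; rewrite dotpBl lerD2r.
rewrite -[s j]mul1r -b_sum1 mulr_suml; apply: ler_sum => i _.
by rewrite ler_wpM2l.
Qed.

Lemma simplex_dist_basis_e pi j i : simplex pi -> `|basis_e R j i - pi i| <= 1 - pi j.
Proof.
move=> [pi_ge0 pi_sum1].
have pi_split : pi j + \sum_(k < n | k != j) pi k = 1 by rewrite -pi_sum1 [in RHS](bigD1 j).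
have rest_ge0 : 0 <= \sum_(k < n | k != j) pi k by apply: sumr_ge0.
rewrite /basis_e; case: eqVneq => [-> | neq_ij].
  by rewrite ger0_norm // subr_ge0 -pi_split lerDl.
have pi_i_le : pi i <= \sum_(k < n | k != j) pi k.
  by rewrite (bigD1 i) //= lerDl; apply: sumr_ge0.
by rewrite sub0r normrN ger0_norm // -pi_split [pi j + _]addrC addrK.
Qed.

Lemma perturbation_gain_le pi D (delta : R) j :
  simplex pi -> norm1 D <= delta -> D j - dotp pi D <= delta * (1 - pi j).
Proof.
move=> pi_simplex D_le.
have gap_ge0 : 0 <= 1 - pi j.
  by apply: le_trans (normr_ge0 _) _; apply: (simplex_dist_basis_e _ j).
rewrite -(dotp_basis_el j D) -dotpBl mulrC.
apply: le_trans (_ : \sum_(i < n) (1 - pi j) * `|D i| <= _); last first.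
  by rewrite -mulr_sumr ler_wpM2l.
apply: ler_sum => i _; apply: le_trans (ler_norm _) _.
by rewrite normrM ler_wpM2r // simplex_dist_basis_e.
Qed.

End Simplex.

Arguments perturbation_gain_le {R n pi D delta}.

Theorem mainTheorem4 (R : realType) (n : nat) (rhat : 'I_n -> R) (delta : R) :
  (1 <= n)%N -> 0 <= delta ->
  forall pi : 'I_n -> R, simplex pi ->
  let V := delta + maxI (fun i => rhat i - delta * pi i) - dotp pi rhat in
  (forall D : 'I_n -> R, norm1 D <= delta ->
     Reg pi (fun i => rhat i + D i) <= V) /\
  (forall k : 'I_n,
     (forall i : 'I_n, rhat i - delta * pi i <= rhat k - delta * pi k) ->
     norm1 (fun i => delta * basis_e R k i) <= delta /\
     Reg pi (fun i => rhat i + delta * basis_e R k i) = V).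
Proof.
move=> n_gt0 delta_ge0 pi pi_simplex V.
have Reg_le_V D : norm1 D <= delta -> Reg pi (fun i => rhat i + D i) <= V.
  move=> D_le; rewrite Reg_maxI // dotpDr.
  have : maxI (fun i => rhat i + D i)
           <= maxI (fun i => rhat i - delta * pi i) + delta + dotp pi D.
    apply: maxI_le => // i.
    have := perturbation_gain_le i pi_simplex D_le.
    have := maxI_ge (fun i => rhat i - delta * pi i) i; rewrite /=; lra.
  rewrite /V; lra.
split=> // k k_max.
have norm1_le : norm1 (fun i => delta * basis_e R k i) <= delta.
  by rewrite norm1_scale_basis_e ger0_norm.
split=> //; apply/le_anti; rewrite Reg_le_V //=.
rewrite Reg_maxI // dotpDr dotp_scale_basis_er /V (maxI_eq k_max).
have : rhat k + delta <= maxI (fun i => rhat i + delta * basis_e R k i).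
  have e_kk : basis_e R k k = 1 by rewrite /basis_e eqxx.
  by have := maxI_ge (fun i => rhat i + delta * basis_e R k i) k; rewrite /= e_kk mulr1.
lra.
Qed.
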